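(* When Alice and Bob share $\Theta(\log N)$ EPR pairs, there is a quantum protocol of cost $O(\log N)$ in the entangled-fingerprinting model for the $\mathsf{ABCD}$ problem on $N\times N$ matrices such that every \textsc{yes} instance is accepted (output 1) with probability at least $0.95$ and every \textsc{no} instance is accepted with probability at most $0.55$.
   Context: Throughout, $N=2^n$ for a positive integer $n$, and $\mathsf{SU}(N)$ denotes the group of $N\times N$ complex unitary matrices of determinant $1$. The $\mathsf{ABCD}$ problem: Alice is given $A,C\in\mathsf{SU}(N)$ explicitly and Bob is given $B,D\in\mathsf{SU}(N)$ explicitly; the required output is $1$ (a \textsc{yes} instance) if $\mathrm{Tr}(ABCD)\ge 0.9N$ and $0$ (a \textsc{no} instance) if $\mathrm{Tr}(ABCD)\le 0.1N$, promised that one of these holds. Quantum simultaneous model with entanglement: Alice and Bob share an input-independent entangled state; each applies a quantum operation depending on their own input to their part and sends all their qubits to a third party Charlie, who applies an input-independent projective measurement whose outcome is the output; the cost is the total number of qubits sent to Charlie. The entangled-fingerprinting model is the special case in which Alice and Bob use their entanglement to prepare a state of the form $\frac{1}{\sqrt{2N}}\sum_{i\in[N]}\big(\lvert 0_A 0_B\rangle\lvert u_i\rangle_A\lvert v_i\rangle_B+\lvert 1_A1_B\rangle\lvert u_i'\rangle_A\lvert v_i'\rangle_B\big)$, where the states $\lvert u_i\rangle,\lvert u_i'\rangle$ are held (prepared) by Alice and $\lvert v_i\rangle,\lvert v_i'\rangle$ by Bob, and send everything to Charlie; Charlie uncomputes the second qubit (obtaining $\frac{1}{\sqrt{2N}}\sum_i(\lvert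 0\rangle\lvert u_i\rangle\lvert v_i\rangle+\lvert1\rangle\lvert u_i'\rangle\lvert v_i'\rangle)$), performs a swap of the last two registers controlled on the first qubit, measures the first qubit in the Hadamard basis, and outputs $1$ iff the outcome is $\lvert +\rangle$ (possibly repeated in parallel with fresh copies, with the output computed from the swap-test statistics). *)

From HB Require Import structures.
From mathcomp Require Import all_boot all_order all_algebra.
From mathcomp Require Import complex.
Set Implicit Arguments. Unset Strict Implicit. Unset Printing Implicit Defensive.
Import Order.TTheory GRing.Theory Num.Theory.
Local Open Scope ring_scope.

Section Defs.
Variable R : rcfType.
Local Notation C := (R[i]).

Definition adjmx (m p : nat) (A : 'M[C]_(m, p)) : 'M[C]_(p, m) :=
  (map_mx (fun z : C => z^*) A)^T.

Definition SU (N : nat) (A : 'M[C]_N) : Prop :=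
  A *m adjmx A = 1%:M /\ \det A = 1.

(* a pure state on a register indexed by the finite type T is a function T -> C *)
Definition inner (T : finType) (f g : T -> C) : C := \sum_(t : T) (f t)^* * g t.

(* orthonormal family of vectors (the images of the computational basis under
   an isometry): this is exactly what a local isometry applied to Alice's (or
   Bob's) half of the n EPR pairs can produce *)
Definition orthonormal_family (N d : nat) (u : 'I_N -> 'I_d -> C) : Prop :=
  forall i j : 'I_N, inner (u i) (u j) = (i == j)%:R.

(* Charlie's state after uncomputing the second qubit:
   1/sqrt(2N) sum_i (|0>|u_i>|v_i> + |1>|u'_i>|v'_i>),
   register = (control qubit, Alice's register, Bob's register) *)
Definition ef_state (N d : nat) (u u' v v' : 'I_N -> 'I_d -> C)
  : bool * 'I_d * 'I_d -> C :=
  fun '(b, x, y) =>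
    (sqrtC (2 * N%:R))^-1 *
    \sum_(i < N) (if b then u' i x * v' i y else u i x * v i y).

Definition cswap (d : nat) (psi : bool * 'I_d * 'I_d -> C)
  : bool * 'I_d * 'I_d -> C :=
  fun '(b, x, y) => if b then psi (b, y, x) else psi (b, x, y).

(* probability that measuring the first qubit in the Hadamard basis gives |+> *)
Definition prob_plus (d : nat) (psi : bool * 'I_d * 'I_d -> C) : C :=
  \sum_(x : 'I_d) \sum_(y : 'I_d)
     `| (sqrtC 2)^-1 * (psi (false, x, y) + psi (true, x, y)) | ^+ 2.

Definition ef_accept (N d : nat) (u u' v v' : 'I_N -> 'I_d -> C) : C :=
  prob_plus (cswap (ef_state u u' v v')).

(* k independent parallel copies, each outcome |+> with probability p; the final
   output is a (input-independent) function of the k outcomes (true = |+>) *)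
Definition repeat_accept (k : nat) (p : C) (post : k.-tuple bool -> bool) : C :=
  \sum_(t : k.-tuple bool)
     (post t)%:R * \prod_(j < k) (if tnth t j then p else 1 - p).

End Defs.

(* resources: each copy uses n+1 EPR pairs (n for the index i in [N], N = 2^n,
   and one for the correlated control qubits |0_A 0_B> + |1_A 1_B>), and sends
   1 + m qubits from Alice and 1 + m qubits from Bob to Charlie *)
Definition ef_cost (m k : nat) : nat := (k * (2 * m + 2))%N.
Definition ef_epr (n k : nat) : nat := (k * (n + 1))%N.

(* Alice uses the conjugated rows of A and the rows of C as her two fingerprint
   families, Bob the conjugated columns of D and the columns of B; unitarity
   makes all four families orthonormal.  The two branches of the swap-test
   state then have equal norm, and their interference term is
   sum_ij (AB)_ij (CD)_ji = tr(ABCD), so a single run accepts with probability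
   1/2 + Re tr(ABCD) / (2N): at least 0.95 on yes instances and at most 0.55 on
   no instances. *)

From HB Require Import structures.
From mathcomp Require Import all_boot all_order all_algebra.
From mathcomp Require Import complex.
From mathcomp Require Import ring zify.
Import Order.TTheory GRing.Theory Num.Theory.
Local Open Scope ring_scope.
Set Implicit Arguments.
Unset Strict Implicit.

Section SwapTest.
Variable R : rcfType.
Local Notation C := R[i].

Lemma conj_inner (T : finType) (f g : T -> C) : (inner f g)^* = inner g f.
Proof.
rewrite /inner rmorph_sum; apply: eq_bigr => x _.
by rewrite rmorphM /= conjCK mulrC.
Qed.

Lemma orthonormal_conj (N d : nat) (u : 'I_N -> 'I_d -> C) :
  orthonormal_family u -> orthonormal_family (fun i x => (u i x)^*).
Proof.
move=> onu i j; rewrite -[_%:R]conjC_nat -onu conj_inner /inner.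
by apply: eq_bigr => x _; rewrite conjCK mulrC.
Qed.

Lemma sum_tensor_mul_conj (I T U : finType) (p r : I -> T -> C) (q s : I -> U -> C) :
  \sum_(x : T) \sum_(y : U) (\sum_(i : I) p i x * q i y) * (\sum_(j : I) r j x * s j y)^*
  = \sum_(i : I) \sum_(j : I) inner (r j) (p i) * inner (s j) (q i).
Proof.
rewrite /inner.
under [RHS]eq_bigr => i _ do under eq_bigr => j _ do rewrite big_distrlr.
under [RHS]eq_bigr => i _ do rewrite exchange_big.
rewrite [RHS]exchange_big; apply: eq_bigr => x _.
under [RHS]eq_bigr => i _ do rewrite exchange_big.
rewrite [RHS]exchange_big; apply: eq_bigr => y _.
rewrite rmorph_sum big_distrlr; apply: eq_bigr => i _; apply: eq_bigr => j _.
by rewrite rmorphM /=; ring.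
Qed.

Lemma sum_orthonormal_inner_mul (N d : nat) (u v : 'I_N -> 'I_d -> C) :
  orthonormal_family u -> orthonormal_family v ->
  \sum_(i < N) \sum_(j < N) inner (u j) (u i) * inner (v j) (v i) = N%:R.
Proof.
move=> onu onv; rewrite -[N in RHS]card_ord -sumr_const; apply: eq_bigr => i _.
under eq_bigr => j _ do rewrite onu onv -natrM mulnb andbb.
by rewrite (bigD1 i) //= eqxx big1 ?addr0 // => j /negbTE ->.
Qed.

(* The interference term between the two branches of the swapped state. *)
Definition ef_overlap (N d : nat) (u u' v v' : 'I_N -> 'I_d -> C) : C :=
  \sum_(i < N) \sum_(j < N) inner (u i) (v' j) * inner (v i) (u' j).

Lemma ef_accept_expand (N d : nat) (u u' v v' : 'I_N -> 'I_d -> C) :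
  ef_accept u u' v v' = (4 * N%:R)^-1 * \sum_(x : 'I_d) \sum_(y : 'I_d)
    `|\sum_(i < N) u i x * v i y + \sum_(i < N) v' i x * u' i y| ^+ 2.
Proof.
rewrite /ef_accept /prob_plus /cswap /ef_state mulr_sumr; apply: eq_bigr => x _.
rewrite mulr_sumr; apply: eq_bigr => y _ /=.
have sqrt_sq (a : C) : 0 <= a -> `|(sqrtC a)^-1| ^+ 2 = a^-1.
  by move=> a0; rewrite normfV ger0_norm ?sqrtC_ge0 // exprVn sqrtCK.
have -> : \sum_(i < N) u' i y * v' i x = \sum_(i < N) v' i x * u' i y.
  by apply: eq_bigr => i _; rewrite mulrC.
rewrite -mulrDr mulrA normrM exprMn normrM exprMn !sqrt_sq ?mulr_ge0 ?ler0n //.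
by rewrite -invfM; congr (_^-1 * _); ring.
Qed.

Lemma conj_ef_overlap (N d : nat) (u u' v v' : 'I_N -> 'I_d -> C) :
  (ef_overlap u u' v v')^* =
  \sum_(i < N) \sum_(j < N) inner (v' j) (u i) * inner (u' j) (v i).
Proof.
rewrite rmorph_sum; apply: eq_bigr => i _; rewrite rmorph_sum; apply: eq_bigr => j _.
by rewrite rmorphM /= !conj_inner.
Qed.

Lemma ef_accept_overlap (N d : nat) (u u' v v' : 'I_N -> 'I_d -> C) :
  (0 < N)%N ->
  orthonormal_family u -> orthonormal_family u' ->
  orthonormal_family v -> orthonormal_family v' ->
  let T := ef_overlap u u' v v' in
  ef_accept u u' v v' = 2^-1 + (T + T^*) / (4 * N%:R).
Proof.
move=> N_gt0 onu onu' onv onv' T; rewrite ef_accept_expand.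
under eq_bigr => x _ do under eq_bigr => y _ do
  rewrite normCK rmorphD mulrDr !mulrDl.
under eq_bigr => x _ do rewrite !big_split.
rewrite !big_split /= !sum_tensor_mul_conj -(conj_ef_overlap u u' v v') -/T.
rewrite (sum_orthonormal_inner_mul onu onv) (sum_orthonormal_inner_mul onv' onu').
rewrite exchange_big /= -/(ef_overlap u u' v v') -/T.
have N_neq0 : N%:R != 0 :> C by rewrite pnatr_eq0 -lt0n.
by field.
Qed.

Lemma swap_test_accept_ge (N : nat) (t T : C) : (0 < N)%N -> 0 <= t ->
  t * N%:R <= T -> (1 + t) / 2 <= 2^-1 + (T + T^*) / (4 * N%:R).
Proof.
move=> N_gt0 t_ge0 tN_le_T; have N_neq0 : N%:R != 0 :> C by rewrite pnatr_eq0 -lt0n.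
have tN_ge0 : 0 <= t * N%:R by rewrite mulr_ge0 ?ler0n.
rewrite geC0_conj ?(le_trans tN_ge0) // -subr_ge0.
have -> : 2^-1 + (T + T) / (4 * N%:R) - (1 + t) / 2 = (T - t * N%:R) / (2 * N%:R).
  by field.
by rewrite divr_ge0 ?mulr_ge0 ?ler0n ?subr_ge0.
Qed.

Lemma swap_test_accept_le (N : nat) (t T : C) : (0 < N)%N -> 0 <= t ->
  T <= t * N%:R -> 2^-1 + (T + T^*) / (4 * N%:R) <= (1 + t) / 2.
Proof.
move=> N_gt0 t_ge0 T_le_tN; have N_neq0 : N%:R != 0 :> C by rewrite pnatr_eq0 -lt0n.
have tN_ge0 : 0 <= t * N%:R by rewrite mulr_ge0 ?ler0n.
(* A complex number below a real one is itself real. *)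
rewrite conj_Creal ?(ler_real T_le_tN) ?ger0_real // -subr_ge0.
have -> : (1 + t) / 2 - (2^-1 + (T + T) / (4 * N%:R)) = (t * N%:R - T) / (2 * N%:R).
  by field.
by rewrite divr_ge0 ?mulr_ge0 ?ler0n ?subr_ge0.
Qed.

Lemma repeat_accept_single (p : C) :
  repeat_accept p (fun t : 1.-tuple bool => tnth t ord0) = p.
Proof.
rewrite /repeat_accept (reindex (fun b : bool => [tuple b])) /=.
  by rewrite big_bool /= !big_ord1 /= mul1r mul0r addr0.
exists (fun t : 1.-tuple bool => tnth t ord0) => [b _ //|t _].
by apply: eq_from_tnth => j; rewrite (ord1 j).
Qed.

End SwapTest.

Section Fingerprints.
Variables (R : rcfType) (N : nat).
Implicit Types A B C D : 'M[R[i]]_N.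

Lemma unitary_rows_orthonormal A :
  A *m adjmx A = 1%:M -> orthonormal_family (fun i x => A i x).
Proof.
move=> AA1 i j; have := congr1 (fun M : 'M[R[i]]_N => M j i) AA1.
rewrite !mxE eq_sym => <-.
by apply: eq_bigr => x _; rewrite !mxE mulrC.
Qed.

Lemma unitary_cols_orthonormal A :
  A *m adjmx A = 1%:M -> orthonormal_family (fun i x => A x i).
Proof.
move=> /mulmx1C AA1 i j; have := congr1 (fun M : 'M[R[i]]_N => M i j) AA1.
rewrite !mxE => <-.
by apply: eq_bigr => x _; rewrite !mxE.
Qed.

Definition alice_fingerprint A C : ('I_N -> 'I_N -> R[i]) * ('I_N -> 'I_N -> R[i]) :=
  ((fun i x => (A i x)^*), (fun i x => C i x)).

Definition bob_fingerprint B D : ('I_N -> 'I_N -> R[i]) * ('I_N -> 'I_N -> R[i]) :=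
  ((fun i x => (D x i)^*), (fun i x => B x i)).

Lemma alice_fingerprint_orthonormal A C :
  A *m adjmx A = 1%:M -> C *m adjmx C = 1%:M ->
  orthonormal_family (alice_fingerprint A C).1 /\
  orthonormal_family (alice_fingerprint A C).2.
Proof.
by move=> /unitary_rows_orthonormal/orthonormal_conj ? /unitary_rows_orthonormal.
Qed.

Lemma bob_fingerprint_orthonormal B D :
  B *m adjmx B = 1%:M -> D *m adjmx D = 1%:M ->
  orthonormal_family (bob_fingerprint B D).1 /\
  orthonormal_family (bob_fingerprint B D).2.
Proof.
by move=> /unitary_cols_orthonormal ? /unitary_cols_orthonormal/orthonormal_conj.
Qed.

Lemma ef_overlap_trace A B C D :
  ef_overlap (alice_fingerprint A C).1 (alice_fingerprint A C).2
             (bob_fingerprint B D).1 (bob_fingerprint B D).2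
  = \tr (A *m B *m C *m D).
Proof.
rewrite -!mulmxA mulmxA /mxtrace; apply: eq_bigr => i _; rewrite mxE.
apply: eq_bigr => j _; rewrite !mxE /inner; congr (_ * _).
  by apply: eq_bigr => x _; rewrite conjCK.
by apply: eq_bigr => x _; rewrite conjCK mulrC.
Qed.

Lemma ef_accept_fingerprints A B C D : (0 < N)%N ->
  A *m adjmx A = 1%:M -> B *m adjmx B = 1%:M ->
  C *m adjmx C = 1%:M -> D *m adjmx D = 1%:M ->
  let T := \tr (A *m B *m C *m D) in
  ef_accept (alice_fingerprint A C).1 (alice_fingerprint A C).2
            (bob_fingerprint B D).1 (bob_fingerprint B D).2
  = 2^-1 + (T + T^*) / (4 * N%:R).
Proof.
move=> N_gt0 uA uB uC uD T.
have [onu onu'] := alice_fingerprint_orthonormal uA uC.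
have [onv onv'] := bob_fingerprint_orthonormal uB uD.
by rewrite ef_accept_overlap // ef_overlap_trace.
Qed.

End Fingerprints.

Theorem theorem4p2 (R : rcfType) :
  exists c : nat,
  forall n : nat, (0 < n)%N ->
  exists (m k : nat)
         (alice : 'M[R[i]]_(2 ^ n) -> 'M[R[i]]_(2 ^ n) ->
                  ('I_(2 ^ n) -> 'I_(2 ^ m) -> R[i]) * ('I_(2 ^ n) -> 'I_(2 ^ m) -> R[i]))
         (bob : 'M[R[i]]_(2 ^ n) -> 'M[R[i]]_(2 ^ n) ->
                  ('I_(2 ^ n) -> 'I_(2 ^ m) -> R[i]) * ('I_(2 ^ n) -> 'I_(2 ^ m) -> R[i]))
         (post : k.-tuple bool -> bool),
    [/\ (0 < k)%N, (ef_cost m k <= c * n)%N & (n <= ef_epr n k <= c * n)%N] /\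
    [/\
        (forall A C : 'M[R[i]]_(2 ^ n), SU A -> SU C ->
            orthonormal_family (alice A C).1 /\ orthonormal_family (alice A C).2),
        (forall B D : 'M[R[i]]_(2 ^ n), SU B -> SU D ->
            orthonormal_family (bob B D).1 /\ orthonormal_family (bob B D).2)
      & forall A B C D : 'M[R[i]]_(2 ^ n), SU A -> SU B -> SU C -> SU D ->
          let p := ef_accept (alice A C).1 (alice A C).2 (bob B D).1 (bob B D).2 in
          ((9 / 10) * (2 ^ n)%:R <= \tr (A *m B *m C *m D) ->
             19 / 20 <= repeat_accept p post) /\
          (\tr (A *m B *m C *m D) <= (1 / 10) * (2 ^ n)%:R ->
             repeat_accept p post <= 11 / 20)].
Proof.
exists 4%N => n n_gt0.
exists n, 1%N, (@alice_fingerprint R _), (@bob_fingerprint R _).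
exists (fun t : 1.-tuple bool => tnth t ord0); split.
  by split; rewrite /ef_cost /ef_epr; lia.
split=> [A C [uA _] [uC _] | B D [uB _] [uD _] |
         A B C D [uA _] [uB _] [uC _] [uD _] p].
- exact: alice_fingerprint_orthonormal.
- exact: bob_fingerprint_orthonormal.
have N_gt0 : (0 < 2 ^ n)%N by rewrite expn_gt0.
rewrite /p repeat_accept_single ef_accept_fingerprints //.
have -> : 19 / 20 = (1 + 9 / 10) / 2 :> R[i] by field.
have -> : 11 / 20 = (1 + 1 / 10) / 2 :> R[i] by field.
split; [apply: swap_test_accept_ge | apply: swap_test_accept_le] => //.
all: by rewrite divr_ge0 ?ler0n.
Qed.
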